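(* In the deterministic crowd-learning system with reward rate $\beta>0$, under selfish user behavior and for any initial condition, the average maximum age satisfies $$\overline{\Delta}_{\max}^{(\beta)}\triangleq\limsup_{T\to\infty}\frac1T\sum_{t=0}^{T-1}\mathbb{E}\Big[\max_n\Delta_n[t]\Big]\le N-1+\frac{p_{\max}}{\beta}.$$
   Context: Deterministic crowd-learning model. There are $N\ge 2$ points of interest (PoIs) and time is slotted, $t=0,1,2,\dots$. Each PoI $n$ has a price $p_n[t]\in[p_{\min},p_{\max}]$ with $0<p_{\min}\le p_{\max}$; the price sequence may be arbitrary. The service provider keeps a recorded price $r_n[t]$ for each PoI, with $r_n[0]\in[p_{\min},p_{\max}]$. Each PoI also has an age $\Delta_n[t]$, with finite initial values. In every slot exactly one user arrives and selects one PoI; we write $S_n[t]=1$ if PoI $n$ is selected and $S_n[t]=0$ otherwise. The selected PoI's record is refreshed: $r_n[t+1]=p_n[t]$ if $S_n[t]=1$, and $r_n[t+1]=r_n[t]$ otherwise. Ages evolve as $$\Delta_n[t+1]=(\Delta_n[t]+1)(1-S_n[t]).$$ Selfish behavior with reward rate $\beta>0$: the user in slot $t$ selects $n^*[t]\in\arg\max_n(\beta\Delta_n[t]-r_n[t])$, with ties broken arbitrarily. *)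

From Stdlib Require Import Reals Lra Lia List.
Import ListNotations.
Open Scope R_scope.

(* PoIs are indexed by n : nat with n < N.
   - p n t   : price of PoI n in slot t
   - r0 n    : initial recorded price r_n[0]
   - D0 n    : initial age Delta_n[0]
   - sel t   : the PoI selected by the user arriving in slot t
               (S_n[t] = 1 iff n = sel t). *)

Definition Sind (sel : nat -> nat) (n t : nat) : bool := Nat.eqb (sel t) n.

Fixpoint rec (p : nat -> nat -> R) (r0 : nat -> R) (sel : nat -> nat)
  (n t : nat) : R :=
  match t with
  | O => r0 n
  | S t' => if Sind sel n t' then p n t' else rec p r0 sel n t'
  end.

Fixpoint age (D0 : nat -> R) (sel : nat -> nat) (n t : nat) : R :=
  match t with
  | O => D0 n
  | S t' => (age D0 sel n t' + 1) * (1 - (if Sind sel n t' then 1 else 0))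
  end.

Definition maxIdx (N : nat) (f : nat -> R) : R :=
  fold_right (fun n acc => Rmax (f n) acc) (f 0%nat) (seq 1 (N - 1)).

Fixpoint sumTo (f : nat -> R) (T : nat) : R :=
  match T with
  | O => 0
  | S T' => sumTo f T' + f T'
  end.

Definition selfish (N : nat) (beta : R) (p : nat -> nat -> R) (r0 D0 : nat -> R)
  (sel : nat -> nat) : Prop :=
  forall t : nat, (sel t < N)%nat /\
    forall m : nat, (m < N)%nat ->
      beta * age D0 sel m t - rec p r0 sel m t
        <= beta * age D0 sel (sel t) t - rec p r0 sel (sel t) t.

Definition limsup_le (u : nat -> R) (L : R) : Prop :=
  forall eps : R, eps > 0 -> exists T0 : nat, forall T : nat, (T >= T0)%nat -> u T <= L + eps.

(* A user always prefers a PoI whose age exceeds that of another by more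
   than (pmax - pmin)/beta.  Hence, if PoI m is old and not selected during
   N consecutive slots, no PoI can be selected twice in that window (a
   repeated PoI would be young while m keeps ageing), so N distinct PoIs
   other than m would be selected: impossible.  Thus from slot N on every
   age is at most N - 1 + (pmax - pmin)/beta, and the finitely many earlier
   slots do not affect the long-run average. *)

From Stdlib Require Import Reals Lra Lia List Classical.
Open Scope R_scope.

Lemma no_injection_avoiding (g : nat -> nat) (N m : nat) :
  (m < N)%nat ->
  (forall j, (j < N)%nat -> (g j < N)%nat /\ g j <> m) ->
  ~ (forall i j, (i < j < N)%nat -> g i <> g j).
Proof.
  intros Hm Hg Hinj.
  set (l := map g (seq 0 N)).
  assert (Hnodup : NoDup l).
  { apply NoDup_map_NoDup_ForallPairs; [| apply seq_NoDup].
    intros a b Ha Hb Eab; apply in_seq in Ha, Hb.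
    destruct (Nat.lt_trichotomy a b) as [Hab | [Hab | Hab]]; auto.
    - exfalso; apply (Hinj a b); [lia | exact Eab].
    - exfalso; apply (Hinj b a); [lia | auto]. }
  assert (Hincl : incl l (remove Nat.eq_dec m (seq 0 N))).
  { intros x Hx; apply in_map_iff in Hx as [j [<- Hj]]; apply in_seq in Hj.
    destruct (Hg j) as [HgN Hgm]; [lia |].
    apply in_in_remove; [exact Hgm | apply in_seq; lia]. }
  pose proof (NoDup_incl_length Hnodup Hincl) as Hlen.
  assert (Hin : In m (seq 0 N)) by (apply in_seq; lia).
  pose proof (remove_length_lt Nat.eq_dec (seq 0 N) m Hin).
  unfold l in Hlen; rewrite length_map, length_seq in Hlen.
  rewrite length_seq in *; lia.
Qed.

Lemma maxIdx_le (N : nat) (f : nat -> R) (B : R) :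
  (1 <= N)%nat -> (forall n, (n < N)%nat -> f n <= B) -> maxIdx N f <= B.
Proof.
  intros HN Hf; unfold maxIdx.
  assert (Hseq : forall n, In n (seq 1 (N - 1)) -> f n <= B)
    by (intros n Hn; apply in_seq in Hn; apply Hf; lia).
  induction (seq 1 (N - 1)) as [| n l IH]; simpl.
  - apply Hf; lia.
  - apply Rmax_lub; [apply Hseq; left; reflexivity |].
    apply IH; intros k Hk; apply Hseq; right; exact Hk.
Qed.

Lemma sumTo_nonneg_mono (h : nat -> R) (m n : nat) :
  (forall t, 0 <= h t) -> (m <= n)%nat -> sumTo h m <= sumTo h n.
Proof.
  intros Hh Hmn; induction Hmn as [| n _ IH]; [lra |].
  simpl; specialize (Hh n); lra.
Qed.

Lemma sumTo_sub_const (f : nat -> R) (B : R) (T : nat) :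
  sumTo (fun t => f t - B) T = sumTo f T - INR T * B.
Proof.
  induction T as [| T IH]; simpl sumTo; [simpl; ring |].
  rewrite IH, S_INR; ring.
Qed.

Lemma sumTo_le_eventually_nonpos (g : nat -> R) (N0 T : nat) :
  (forall t, (N0 <= t)%nat -> g t <= 0) ->
  sumTo g T <= sumTo (fun t => Rabs (g t)) N0.
Proof.
  intros Hg.
  assert (Hmin : forall T0, sumTo g T0 <= sumTo (fun t => Rabs (g t)) (Nat.min T0 N0)).
  { induction T0 as [| T0 IH]; [simpl; lra |].
    destruct (Nat.lt_ge_cases T0 N0) as [HT | HT].
    - rewrite Nat.min_l in * by lia; simpl.
      pose proof (Rle_abs (g T0)); lra.
    - rewrite Nat.min_r in * by lia; simpl.
      specialize (Hg T0 HT); lra. }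
  eapply Rle_trans; [apply Hmin |].
  apply sumTo_nonneg_mono; [intros; apply Rabs_pos | lia].
Qed.

Lemma limsup_le_average_of_eventually_le (f : nat -> R) (B : R) (N0 : nat) :
  (forall t, (N0 <= t)%nat -> f t <= B) ->
  limsup_le (fun T => / INR T * sumTo f T) B.
Proof.
  intros Hf eps Heps.
  set (C := sumTo (fun t => Rabs (f t - B)) N0).
  assert (Hsum : forall T, sumTo f T <= C + INR T * B).
  { intros T.
    assert (Hexcess : sumTo (fun t => f t - B) T <= C).
    { apply (sumTo_le_eventually_nonpos (fun t => f t - B)).
      intros t Ht; specialize (Hf t Ht); lra. }
    rewrite sumTo_sub_const in Hexcess; lra. }
  destruct (INR_archimed eps C Heps) as [n Hn].
  exists (S n); intros T HT.
  assert (HTpos : 0 < INR T) by (apply lt_0_INR; lia).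
  assert (HnT : INR n <= INR T) by (apply le_INR; lia).
  assert (HCT : C <= INR T * eps) by nra.
  apply Rmult_le_reg_l with (INR T); [exact HTpos |].
  rewrite <- Rmult_assoc, Rinv_r by lra.
  specialize (Hsum T); lra.
Qed.

Section SelfishCrowd.

Variables (N : nat) (beta pmin pmax : R).
Variables (p : nat -> nat -> R) (r0 D0 : nat -> R) (sel : nat -> nat).

Hypothesis beta_pos : beta > 0.
Hypothesis pmin_le_pmax : pmin <= pmax.
Hypothesis p_range : forall n t, (n < N)%nat -> pmin <= p n t <= pmax.
Hypothesis r0_range : forall n, (n < N)%nat -> pmin <= r0 n <= pmax.
Hypothesis sel_selfish : selfish N beta p r0 D0 sel.

Lemma age_S_selected (n t : nat) : sel t = n -> age D0 sel n (S t) = 0.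
Proof. intros E; simpl; unfold Sind; rewrite E, Nat.eqb_refl; ring. Qed.

Lemma age_S_unselected (n t : nat) :
  sel t <> n -> age D0 sel n (S t) = age D0 sel n t + 1.
Proof. intros E; simpl; unfold Sind; rewrite (proj2 (Nat.eqb_neq _ _) E); ring. Qed.

Lemma age_after_selection (n u k : nat) :
  sel u = n -> age D0 sel n (S u + k) <= INR k.
Proof.
  intros E; induction k as [| k IH].
  - rewrite Nat.add_0_r, age_S_selected by exact E; simpl; lra.
  - replace (S u + S k)%nat with (S (S u + k)) by lia.
    rewrite S_INR.
    destruct (Nat.eq_dec (sel (S u + k)) n) as [E' | E'].
    + rewrite age_S_selected by exact E'; pose proof (pos_INR k); lra.
    + rewrite age_S_unselected by exact E'; lra.
Qed.

Lemma age_unselected_window (m t k : nat) :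
  (forall j, (j < k)%nat -> sel (t + j)%nat <> m) ->
  age D0 sel m (t + k) = age D0 sel m t + INR k.
Proof.
  induction k as [| k IH]; intros Hk.
  - rewrite Nat.add_0_r; simpl; ring.
  - replace (t + S k)%nat with (S (t + k)) by lia.
    rewrite age_S_unselected, IH, S_INR by (try intros; apply Hk; lia); ring.
Qed.

Lemma rec_range (n t : nat) : (n < N)%nat -> pmin <= rec p r0 sel n t <= pmax.
Proof.
  intros Hn; induction t as [| t IH]; simpl; [auto |].
  destruct (Sind sel n t); auto.
Qed.

(* The selfish user at slot t + j prefers the PoI s chosen at slot t + i
   (age at most j - i - 1) to m (age above (pmax - pmin)/beta - 1 + j);
   comparing utilities forces i < 0. *)
Lemma selfish_window_no_repeat (m t : nat) :
  (m < N)%nat ->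
  age D0 sel m t > (pmax - pmin) / beta - 1 ->
  (forall j, (j < N)%nat -> sel (t + j)%nat <> m) ->
  forall i j, (i < j < N)%nat -> sel (t + i)%nat <> sel (t + j)%nat.
Proof.
  intros Hm Hold Hskip i j Hij E.
  set (s := sel (t + j)%nat) in E.
  destruct (sel_selfish (t + j)%nat) as [HsN Hpref].
  specialize (Hpref m Hm); fold s in Hpref, HsN.
  rewrite age_unselected_window in Hpref by (intros; apply Hskip; lia).
  assert (Hs_young : age D0 sel s (t + j) <= INR j - INR i - 1).
  { replace (t + j)%nat with (S (t + i) + (j - i - 1))%nat by lia.
    eapply Rle_trans; [apply age_after_selection; exact E |].
    rewrite !minus_INR by lia; simpl INR; lra. }
  pose proof (rec_range m (t + j) Hm).
  pose proof (rec_range s (t + j) HsN).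
  pose proof (pos_INR i).
  assert (Hdiv : beta * ((pmax - pmin) / beta) = pmax - pmin) by (field; lra).
  assert (beta * age D0 sel s (t + j) <= beta * (INR j - INR i - 1))
    by (apply Rmult_le_compat_l; lra).
  assert (beta * age D0 sel m t > beta * ((pmax - pmin) / beta - 1))
    by (apply Rmult_lt_compat_l; lra).
  nra.
Qed.

Lemma selfish_old_selected (m t : nat) :
  (m < N)%nat ->
  age D0 sel m t > (pmax - pmin) / beta - 1 ->
  exists j, (j < N)%nat /\ sel (t + j)%nat = m.
Proof.
  intros Hm Hold; apply NNPP; intros Hnone.
  assert (Hskip : forall j, (j < N)%nat -> sel (t + j)%nat <> m)
    by (intros j Hj E; apply Hnone; exists j; auto).
  apply (no_injection_avoiding (fun j => sel (t + j)%nat) N m Hm).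
  - intros j Hj; split; [apply sel_selfish | apply Hskip; exact Hj].
  - exact (selfish_window_no_repeat m t Hm Hold Hskip).
Qed.

Lemma selfish_age_le_eventually (m t : nat) :
  (m < N)%nat -> (N <= t)%nat ->
  age D0 sel m t <= INR N - 1 + (pmax - pmin) / beta.
Proof.
  intros Hm Ht.
  assert (Hslack : 0 <= (pmax - pmin) / beta)
    by (apply Rmult_le_pos; [| left; apply Rinv_0_lt_compat]; lra).
  set (t0 := (t - N)%nat).
  destruct (classic (exists j, (j < N)%nat /\ sel (t0 + j)%nat = m))
    as [[j [Hj E]] | Hnone].
  - replace t with (S (t0 + j) + (N - j - 1))%nat by (unfold t0; lia).
    eapply Rle_trans; [apply age_after_selection; exact E |].
    rewrite !minus_INR by lia; simpl INR.
    pose proof (pos_INR j); lra.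
  - replace t with (t0 + N)%nat by (unfold t0; lia).
    rewrite age_unselected_window by (intros j Hj E; apply Hnone; exists j; auto).
    destruct (Rle_lt_dec (age D0 sel m t0) ((pmax - pmin) / beta - 1))
      as [Hyoung | Hold]; [lra |].
    exfalso; apply Hnone; apply selfish_old_selected; assumption.
Qed.

End SelfishCrowd.

Theorem mainTheorem2 (N : nat) (beta pmin pmax : R)
  (p : nat -> nat -> R) (r0 D0 : nat -> R) (sel : nat -> nat) :
  (2 <= N)%nat -> beta > 0 -> 0 < pmin -> pmin <= pmax ->
  (forall n t, (n < N)%nat -> pmin <= p n t <= pmax) ->
  (forall n, (n < N)%nat -> pmin <= r0 n <= pmax) ->
  (forall n, (n < N)%nat -> 0 <= D0 n) ->
  selfish N beta p r0 D0 sel ->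
  limsup_le
    (fun T => / INR T * sumTo (fun t => maxIdx N (fun n => age D0 sel n t)) T)
    (INR N - 1 + pmax / beta).
Proof.
  intros HN Hbeta Hpmin Hle Hp Hr _ Hsel.
  apply limsup_le_average_of_eventually_le with (N0 := N).
  intros t Ht; apply maxIdx_le; [lia |]; intros n Hn.
  eapply Rle_trans;
    [apply (selfish_age_le_eventually N beta pmin pmax p r0 D0 sel); assumption |].
  assert ((pmax - pmin) / beta <= pmax / beta)
    by (apply Rmult_le_compat_r; [left; apply Rinv_0_lt_compat |]; lra).
  lra.
Qed.
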